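(* Let $(S,\mathcal C)$ be a connectoid. For every end $\omega$ of $(S,\mathcal C)$ there is a unique direction $d_\omega$ of $(S,\mathcal C)$ such that $d_\omega(A)=K(A,\omega)$ for every finite set $A\subseteq S$. The map $\omega\mapsto d_\omega$ is a bijection between $\Omega(S,\mathcal C)$ and the set of directions of $(S,\mathcal C)$.
   Context: A connectoid is given by a set $S$ and a set $\mathcal F$ of finite subsets of $S$ such that (i) $F\cup F'\in\mathcal F$ whenever $F,F'\in\mathcal F$ and $F\cap F'\neq\emptyset$, and (ii) $\emptyset\in\mathcal F$ and $\{s\}\in\mathcal F$ for every $s\in S$. A set $C\subseteq S$ is connected if for all $x,y\in C$ there is $F\in\mathcal F$ with $F\subseteq C$ and $x,y\in F$; $\mathcal C$ is the set of connected sets and $(S,\mathcal C)$ is the connectoid (the finite connected sets are exactly the elements of $\mathcal F$). For $S'\subseteq S$, a component of $S'$ is a maximal connected subset of $S'$, and $\mathcal K(S')$ is the set of components of $S'$ (it partitions $S'$). ''Almost all'' means all but finitely many. A necklace is a connected set $N$ for which there is a family $(H_n)_{n\in\mathbb N}$ of finite connected sets with $N=\bigcup_n H_n$ and $H_i\cap H_j\neq\emptyset$ iff $|i-j|\le 1$. For a necklace $N$ and finite $X\subseteq S$, exactly one element of $\mathcal K(N\setminus X)$ contains almost all elements of $N$; it is called the $X$-tail of $N$. Two necklaces are equivalent if for every finite $X\subseteq S$ their $X$-tails are contained in the same element of $\mathcal K(S\setminus X)$. An end is an equivalence class of necklaces; $\Omega(S,\mathcal C)$ is the set of ends. For an end $\omega$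 and finite $X\subseteq S$, $K(X,\omega)$ denotes the element of $\mathcal K(S\setminus X)$ containing the $X$-tails of all necklaces in $\omega$. A direction of $(S,\mathcal C)$ is a map $d$ assigning to every finite $A\subseteq S$ an element $d(A)\in\mathcal K(S\setminus A)$ such that $d(B)\subseteq d(A)$ whenever $A\subseteq B$ are finite subsets of $S$. *)

(* sets are predicates T -> Prop; the ground set S is the type T. *)
From Stdlib Require Import List Arith.
Set Implicit Arguments.

Section Connectoids.
Variable T : Type.

Definition subset (X Y : T -> Prop) : Prop := forall x, X x -> Y x.
Definition setminus (X A : T -> Prop) : T -> Prop := fun x => X x /\ ~ A x.
Definition setU (X Y : T -> Prop) : T -> Prop := fun x => X x \/ Y x.
Definition setT : T -> Prop := fun _ => True.
Definition finite (X : T -> Prop) : Prop :=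
  exists l : list T, forall x, X x -> In x l.

(* (S, F) is a connectoid; F is a family of finite subsets of S.
   F is required to be closed under extensional equality of predicates
   (a representation convention: sets are predicates). *)
Definition is_connectoid (F : (T -> Prop) -> Prop) : Prop :=
  (forall X, F X -> finite X) /\
  (forall X Y, F X -> (forall x, X x <-> Y x) -> F Y) /\
  (forall X Y, F X -> F Y -> (exists x, X x /\ Y x) -> F (setU X Y)) /\
  F (fun _ => False) /\
  (forall s, F (fun x => x = s)).

Variable F : (T -> Prop) -> Prop.

Definition connected (C : T -> Prop) : Prop :=
  forall x y, C x -> C y -> exists X, F X /\ subset X C /\ X x /\ X y.

(* C is a component of X: a (nonempty) maximal connected subset of X.
   Components are nonempty, as K(X) is a partition of X. *)
Definition component (X C : T -> Prop) : Prop :=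
  (exists x, C x) /\ subset C X /\ connected C /\
  (forall D, connected D -> subset C D -> subset D X -> subset D C).

Definition necklace (N : T -> Prop) : Prop :=
  connected N /\
  exists H : nat -> (T -> Prop),
    (forall n, finite (H n) /\ connected (H n)) /\
    (forall x, N x <-> exists n, H n x) /\
    (forall i j, (exists x, H i x /\ H j x) <-> (i <= j + 1 /\ j <= i + 1)).

Definition tail (X N D : T -> Prop) : Prop :=
  component (setminus N X) D /\ finite (setminus N D).

Definition neck_equiv (N M : T -> Prop) : Prop :=
  forall X, finite X ->
    exists C, component (setminus setT X) C /\
      (exists D, tail X N D /\ subset D C) /\
      (exists D, tail X M D /\ subset D C).

Definition is_end (w : (T -> Prop) -> Prop) : Prop :=
  exists N, necklace N /\ forall M, w M <-> (necklace M /\ neck_equiv N M).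

Definition isK (A : T -> Prop) (w : (T -> Prop) -> Prop) (C : T -> Prop) : Prop :=
  component (setminus setT A) C /\
  forall N, w N -> exists D, tail A N D /\ subset D C.

(* a direction (only its values on finite sets matter) *)
Definition is_direction (d : (T -> Prop) -> (T -> Prop)) : Prop :=
  (forall A, finite A -> component (setminus setT A) (d A)) /\
  (forall A B, finite A -> finite B -> subset A B -> subset (d B) (d A)).

End Connectoids.

(* Equivalent necklaces have their A-tails in a common component of S \ A,
   and any two cofinite subsets of one necklace meet; so an end w determines a
   single component K(A, w), and these components shrink as A grows.  Two ends
   with the same direction share every K(A, _) and hence the same necklaces.

   Conversely, given a direction d we thread a necklace through finite sets
   B_0 <= B_1 <= ...: the k-th bead is a finite connected subset of d(B_k)
   joining a point of d(B_k) to a point of d(B_(k+1)), and B_(k+2) contains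
   it, so non-consecutive beads are disjoint.  The necklace induces d as soon
   as its beads eventually meet d(X) for every finite X.  Call a finite W
   dominating if d(X) meets W whenever X is finite and disjoint from W.  If
   every finite set is avoided by some finite dominating set, we add such a
   set to B at each step and force the beads through it.  Otherwise some finite
   Z meets every finite dominating set; then no W \ Z with W finite is
   dominating, and adding witnesses of this to Z again and again produces
   finite sets A_n whose components d(A_n) are eventually inside every d(X). *)
From Pilot Require Import Defs.
From Stdlib Require Import List Arith Lia Classical ClassicalEpsilon
  FunctionalExtensionality PropExtensionality.

Section FiniteSets.
Context {T : Type}.

Lemma set_ext (A B : T -> Prop) : (forall x, A x <-> B x) -> A = B.
Proof.
  intros h. apply functional_extensionality. intros x.
  apply propositional_extensionality. apply h.
Qed.

Lemma finite_empty : finite (fun _ : T => False).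
Proof. exists nil. intros x []. Qed.

Lemma finite_union (X Y : T -> Prop) : finite X -> finite Y -> finite (setU X Y).
Proof.
  intros [l1 h1] [l2 h2]. exists (l1 ++ l2).
  intros x [hx|hx]; apply in_or_app; auto.
Qed.

Lemma finite_subset (X Y : T -> Prop) : subset X Y -> finite Y -> finite X.
Proof. intros s [l h]. exists l. intros x hx. apply h, s, hx. Qed.

Lemma finite_bigU (H : nat -> T -> Prop) : (forall n, finite (H n)) ->
  forall m, finite (fun x => exists n, n < m /\ H n x).
Proof.
  intros hH m. induction m as [|m IH].
  - exists nil. intros x [n [h _]]. lia.
  - apply finite_subset with (setU (fun x => exists n, n < m /\ H n x) (H m)).
    + intros x [n [hn hx]]. destruct (Nat.eq_dec n m) as [->|hne]; [right|left]; auto.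
      exists n. split; auto. lia.
    + apply finite_union; auto.
Qed.

Lemma list_eventually (P : nat -> T -> Prop) :
  (forall n m x, n <= m -> P n x -> P m x) ->
  forall l, (forall x, In x l -> exists n, P n x) ->
  exists N, forall x, In x l -> P N x.
Proof.
  intros hm l. induction l as [|a l IH]; intros h.
  - exists 0. intros x [].
  - destruct IH as [N hN]; [intros x hx; apply h; right; auto|].
    destruct (h a (or_introl eq_refl)) as [n hn].
    exists (Nat.max N n). intros x [<-|hx].
    + apply hm with n; auto; lia.
    + apply hm with N; auto; lia.
Qed.

Lemma finite_eventually (P : nat -> T -> Prop) (X : T -> Prop) :
  (forall n m x, n <= m -> P n x -> P m x) -> finite X ->
  (forall x, X x -> exists n, P n x) -> exists N, forall x, X x -> P N x.
Proof.
  intros hm [l hl] h.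
  destruct (list_eventually (fun n x => X x -> P n x)) with l as [N hN].
  - intros n m x hnm hx hX. apply hm with n; auto.
  - intros x _. destruct (classic (X x)) as [hX|hX].
    + destruct (h x hX) as [n hn]. exists n. auto.
    + exists 0. intros hX'. contradiction.
  - exists N. intros x hX. apply hN; auto.
Qed.

Lemma finite_meets_decreasing (S : nat -> T -> Prop) (X : T -> Prop) :
  (forall m n, m <= n -> subset (S n) (S m)) -> finite X ->
  (forall n, exists x, X x /\ S n x) -> exists x, X x /\ forall n, S n x.
Proof.
  intros hS hX hmeet. apply NNPP; intros hnone.
  destruct (finite_eventually (fun n x => ~ S n x) X) as [N hN]; auto.
  - intros n m x hnm h hm. apply h, (hS n m hnm), hm.
  - intros x hx. apply NNPP; intros hall. apply hnone. exists x. split; auto.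
    intros n. apply NNPP; intros h. apply hall. exists n; auto.
  - destruct (hmeet N) as [x [hx hSx]]. apply (hN x hx hSx).
Qed.

End FiniteSets.

Section Connectoid.
Variable T : Type.
Variable F : (T -> Prop) -> Prop.
Hypothesis hF : is_connectoid F.

Lemma connectoid_finite X : F X -> finite X.
Proof. apply hF. Qed.

Lemma connectoid_union X Y :
  F X -> F Y -> (exists x, X x /\ Y x) -> F (setU X Y).
Proof. apply hF. Qed.

Lemma connectoid_empty : F (fun _ => False).
Proof. apply hF. Qed.

Lemma F_connected X : F X -> connected F X.
Proof. intros HX x y hx hy. exists X. repeat split; auto. intros z hz; exact hz. Qed.

Lemma connected_union C1 C2 : connected F C1 -> connected F C2 ->
  (exists z, C1 z /\ C2 z) -> connected F (setU C1 C2).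
Proof.
  intros h1 h2 [z [z1 z2]].
  assert (across : forall a b, C1 a -> C2 b ->
            exists X, F X /\ subset X (setU C1 C2) /\ X a /\ X b).
  { intros a b ha hb.
    destruct (h1 a z ha z1) as [X1 [f1 [s1 [a1 b1]]]].
    destruct (h2 z b z2 hb) as [X2 [f2 [s2 [a2 b2]]]].
    exists (setU X1 X2). repeat split.
    - apply connectoid_union; auto. exists z; auto.
    - intros w [hw|hw]; [left; apply s1 | right; apply s2]; auto.
    - left; auto.
    - right; auto. }
  intros x y [hx|hx] [hy|hy].
  - destruct (h1 x y hx hy) as [X [f [s [a b]]]].
    exists X. repeat split; auto. intros w hw; left; auto.
  - apply across; auto.
  - destruct (across y x hy hx) as [X [f [s [a b]]]]. exists X; auto.
  - destruct (h2 x y hx hy) as [X [f [s [a b]]]].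
    exists X. repeat split; auto. intros w hw; right; auto.
Qed.

Lemma component_absorb Y K C : component F Y K -> connected F C ->
  subset C Y -> (exists z, C z /\ K z) -> subset C K.
Proof.
  intros [_ [hKY [hK hmax]]] hC hCY [z [zc zk]].
  assert (hU : subset (setU K C) K).
  { apply hmax.
    - apply connected_union; auto. exists z; auto.
    - intros w hw; left; auto.
    - intros w [hw|hw]; auto. }
  intros w hw. apply hU. right; auto.
Qed.

Lemma component_eq Y K1 K2 : component F Y K1 -> component F Y K2 ->
  (exists z, K1 z /\ K2 z) -> K1 = K2.
Proof.
  intros h1 h2 [z [z1 z2]].
  apply set_ext; intros x; split; intros hx.
  - apply (component_absorb Y K2 K1); try apply h1; auto. exists z; auto.
  - apply (component_absorb Y K1 K2); try apply h2; auto. exists z; auto.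
Qed.

(* The component is the union of all connected subsets of [Y] containing [C]. *)
Lemma component_exists Y C : connected F C -> (exists z, C z) -> subset C Y ->
  exists K, component F Y K /\ subset C K.
Proof.
  intros hC [z hz] hCY.
  set (K := fun x => exists D, connected F D /\ subset D Y /\ subset C D /\ D x).
  assert (hCK : subset C K).
  { intros x hx. exists C. repeat split; auto. intros w hw; exact hw. }
  exists K. split; [|exact hCK]. repeat split.
  - exists z. apply hCK; auto.
  - intros x [D [_ [hD [_ hx]]]]. apply hD; auto.
  - intros x y [D1 [c1 [s1 [e1 x1]]]] [D2 [c2 [s2 [e2 y2]]]].
    assert (hU : connected F (setU D1 D2)).
    { apply connected_union; auto. exists z; split; [apply e1|apply e2]; auto. }
    destruct (hU x y (or_introl x1) (or_intror y2)) as [X [f [s [a b]]]].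
    exists X. repeat split; auto.
    intros w hw. exists (setU D1 D2). repeat split; auto.
    + intros v [hv|hv]; auto.
    + intros v hv; left; apply e1; auto.
  - intros D hD hKD hDY x hx. exists D. repeat split; auto.
    intros w hw. apply hKD, hCK; auto.
Qed.

Lemma connected_cover C : connected F C -> forall l : list T,
  exists H, F H /\ subset H C /\ (forall x, In x l -> C x -> H x).
Proof.
  intros hC l. induction l as [|a l IH].
  - exists (fun _ => False). repeat split.
    + apply connectoid_empty.
    + intros x [].
    + intros x [].
  - destruct IH as [H [fH [sH iH]]].
    destruct (classic (C a)) as [ha|ha].
    + destruct (classic (exists b, H b)) as [[b hb]|hnb].
      * destruct (hC a b ha (sH b hb)) as [X [fX [sX [xa xb]]]].
        exists (setU H X). repeat split.
        -- apply connectoid_union; auto. exists b; auto.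
        -- intros w [hw|hw]; auto.
        -- intros x [<-|hx] hCx; [right|left]; auto.
      * destruct (hC a a ha ha) as [X [fX [sX [xa _]]]].
        exists X. repeat split; auto.
        intros x [<-|hx] hCx; auto. exfalso; apply hnb; exists x; auto.
    + exists H. repeat split; auto.
      intros x [<-|hx] hCx; [contradiction|auto].
Qed.

Lemma chain_connected (H : nat -> T -> Prop) : (forall n, connected F (H n)) ->
  (forall n, exists x, H n x /\ H (S n) x) ->
  forall k, connected F (fun x => exists n, k <= n /\ H n x).
Proof.
  intros hc hi k.
  assert (walk : forall m i x y, k <= i -> H i x -> H (i + m) y ->
            exists X, F X /\ subset X (fun x => exists n, k <= n /\ H n x) /\ X x /\ X y).
  { induction m as [|m IH]; intros i x y hk hx hy.
    - rewrite Nat.add_0_r in hy. destruct (hc i x y hx hy) as [X [f [s [a b]]]].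
      exists X. repeat split; auto. intros w hw. exists i. split; auto.
    - destruct (hi (i + m)) as [z [z1 z2]].
      destruct (IH i x z hk hx z1) as [X1 [f1 [s1 [a1 b1]]]].
      rewrite Nat.add_succ_r in hy.
      destruct (hc (S (i + m)) z y z2 hy) as [X2 [f2 [s2 [a2 b2]]]].
      exists (setU X1 X2). repeat split.
      + apply connectoid_union; auto. exists z; auto.
      + intros w [hw|hw]; auto. exists (S (i + m)). split; [lia|auto].
      + left; auto.
      + right; auto. }
  intros x y [i [hi1 hx]] [j [hj1 hy]].
  destruct (le_lt_dec i j) as [hij|hij].
  - replace j with (i + (j - i)) in hy by lia. apply (walk (j - i) i); auto.
  - replace i with (j + (i - j)) in hx by lia.
    destruct (walk (i - j) j y x hj1 hy hx) as [X [f [s [a b]]]]. exists X; auto.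
Qed.

Lemma chain_avoids_finite (H : nat -> T -> Prop) :
  (forall i j, (exists x, H i x /\ H j x) -> i <= j + 1) ->
  forall X, finite X -> exists n0, forall n x, n0 <= n -> H n x -> ~ X x.
Proof.
  intros hij X hX.
  destruct (finite_eventually (fun n x => forall m, n <= m -> ~ H m x) X) as [N hN]; auto.
  - intros n m x hnm h k hk. apply h. lia.
  - intros x _. destruct (classic (exists i, H i x)) as [[i hi]|hn].
    + exists (S (S i)). intros m hm hmx.
      assert (m <= i + 1) by (apply hij; exists x; auto). lia.
    + exists 0. intros m _ hmx. apply hn; exists m; auto.
  - exists N. intros n x hn hx hX'. apply (hN x hX' n hn hx).
Qed.

Lemma necklace_beads N : necklace F N -> exists H : nat -> T -> Prop,
  (forall n, finite (H n) /\ connected F (H n)) /\ (forall x, N x <-> exists n, H n x) /\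
  (forall n, exists x, H n x) /\ (forall n, exists x, H n x /\ H (S n) x) /\
  (forall X, finite X -> exists n0, forall n x, n0 <= n -> H n x -> ~ X x).
Proof.
  intros [_ [H [hH [hN hij]]]]. exists H. do 2 (split; auto). split; [|split].
  - intros n. destruct (proj2 (hij n n)) as [x [hx _]]; [lia|]. exists x; auto.
  - intros n. apply (hij n (S n)). lia.
  - apply chain_avoids_finite. intros i j h. apply (hij i j), h.
Qed.

Lemma necklace_cofinite_meet N D1 D2 : necklace F N ->
  finite (setminus N D1) -> finite (setminus N D2) -> exists x, D1 x /\ D2 x.
Proof.
  intros hN f1 f2.
  destruct (necklace_beads N hN) as [H [_ [hNH [hne [_ hfar]]]]].
  destruct (hfar _ (finite_union _ _ f1 f2)) as [n0 hn0].
  destruct (hne n0) as [x hx].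
  assert (hNx : N x) by (apply hNH; exists n0; auto).
  exists x. split; apply NNPP; intros hc; apply (hn0 n0 x (le_n _) hx); [left|right]; split; auto.
Qed.

Lemma tail_exists N X : necklace F N -> finite X -> exists D, Defs.tail F X N D.
Proof.
  intros hN hX.
  destruct (necklace_beads N hN) as [H [hH [hNH [hne [hlink hfar]]]]].
  destruct (hfar X hX) as [n0 hn0].
  set (C := fun x => exists n, n0 <= n /\ H n x).
  assert (hC : connected F C) by (apply chain_connected; auto; intros n; apply hH).
  assert (hCne : exists z, C z).
  { destruct (hne n0) as [x hx]. exists x, n0; auto. }
  assert (hCs : subset C (setminus N X)).
  { intros x [n [hn hx]]. split; [apply hNH; exists n; auto|]. apply (hn0 n x hn hx). }
  destruct (component_exists _ _ hC hCne hCs) as [K [hK hCK]].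
  exists K. split; auto.
  apply finite_subset with (fun x => exists n, n < n0 /\ H n x).
  - intros x [hx hKx]. apply hNH in hx as [n hn]. exists n. split; auto.
    destruct (le_lt_dec n0 n) as [h|h]; auto.
    exfalso. apply hKx, hCK. exists n; auto.
  - apply finite_bigU. intros n; apply hH.
Qed.

Lemma tail_in_component X N D : Defs.tail F X N D ->
  exists C, component F (setminus (@setT T) X) C /\ subset D C.
Proof.
  intros [[hne [hs [hc _]]] _].
  apply component_exists; auto.
  intros x hx. split; [exact I|]. apply (hs x hx).
Qed.

Lemma neck_equiv_refl N : necklace F N -> neck_equiv F N N.
Proof.
  intros hN X hX. destruct (tail_exists N X hN hX) as [D hD].
  destruct (tail_in_component X N D hD) as [C [hC hDC]].
  exists C. split; auto. split; exists D; auto.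
Qed.

Lemma end_necklace w : is_end F w -> exists N, necklace F N /\ w N.
Proof.
  intros [N [hN hw]]. exists N. split; auto. apply hw. split; auto.
  apply neck_equiv_refl; auto.
Qed.

(* Tails of necklaces of [w] all meet a tail of one fixed necklace. *)
Lemma isK_exists w A : is_end F w -> finite A -> exists C, isK F A w C.
Proof.
  intros [N0 [hN0 hw]] hA.
  destruct (tail_exists N0 A hN0 hA) as [D0 hD0].
  destruct (tail_in_component A N0 D0 hD0) as [C [hC hD0C]].
  exists C. split; auto. intros M hM. apply hw in hM as [hM he].
  destruct (he A hA) as [C' [hC' [[D [hD hDC']] [D' [hD' hD'C']]]]].
  exists D'. split; auto.
  replace C with C'; auto.
  apply (component_eq _ _ _ hC' hC).
  destruct (necklace_cofinite_meet N0 D D0 hN0 (proj2 hD) (proj2 hD0)) as [z [z1 z2]].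
  exists z; auto.
Qed.

Lemma isK_unique w A C1 C2 : is_end F w -> isK F A w C1 -> isK F A w C2 -> C1 = C2.
Proof.
  intros hw [h1 k1] [h2 k2]. destruct (end_necklace w hw) as [N [hN hwN]].
  destruct (k1 N hwN) as [D1 [t1 s1]]. destruct (k2 N hwN) as [D2 [t2 s2]].
  apply (component_eq _ _ _ h1 h2).
  destruct (necklace_cofinite_meet N D1 D2 hN (proj2 t1) (proj2 t2)) as [z [z1 z2]].
  exists z; auto.
Qed.

Lemma isK_antitone w A B CA CB : is_end F w -> subset A B ->
  isK F A w CA -> isK F B w CB -> subset CB CA.
Proof.
  intros hw hAB [cA kA] [cB kB].
  destruct (end_necklace w hw) as [N [hN hwN]].
  destruct (kA N hwN) as [DA [tA sA]]. destruct (kB N hwN) as [DB [tB sB]].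
  apply (component_absorb _ CA CB cA); [apply cB| |].
  - intros x hx. destruct cB as [_ [s _]]. destruct (s x hx) as [_ h].
    split; [exact I|]. intros ha; apply h, hAB, ha.
  - destruct (necklace_cofinite_meet N DA DB hN (proj2 tA) (proj2 tB)) as [z [z1 z2]].
    exists z; auto.
Qed.

Lemma end_direction w : is_end F w ->
  exists d, is_direction F d /\ forall A, finite A -> isK F A w (d A).
Proof.
  intros hw.
  set (dw := fun (A : T -> Prop) (x : T) => exists C, isK F A w C /\ C x).
  assert (dw_isK : forall A C, isK F A w C -> dw A = C).
  { intros A C hC. apply set_ext. intros x; split.
    - intros [C' [h' hx]]. rewrite (isK_unique w A C C' hw hC h'); auto.
    - intros hx. exists C; auto. }
  assert (hK : forall A, finite A -> isK F A w (dw A)).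
  { intros A hA. destruct (isK_exists w A hw hA) as [C hC].
    rewrite (dw_isK A C hC). exact hC. }
  exists dw. split; [split|exact hK].
  - intros A hA. apply hK; auto.
  - intros A B hA hB hAB. apply (isK_antitone w A B); auto.
Qed.

Lemma end_eq_of_isK w1 w2 d : is_end F w1 -> is_end F w2 ->
  (forall A, finite A -> isK F A w1 (d A)) ->
  (forall A, finite A -> isK F A w2 (d A)) ->
  forall N, w1 N -> w2 N.
Proof.
  intros [N1 [hN1 hw1]] [N2 [hN2 hw2]] k1 k2 N hN.
  assert (hN2w : w2 N2) by (apply hw2; split; auto; apply neck_equiv_refl; auto).
  apply hw1 in hN as [hN he].
  apply hw2. split; auto.
  intros X hX. exists (d X). split; [apply (k1 X hX)|]. split.
  - apply (k2 X hX). auto.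
  - apply (k1 X hX). apply hw1. auto.
Qed.


Section Direction.
Variable d : (T -> Prop) -> (T -> Prop).
Hypothesis hd : is_direction F d.

Lemma d_component A : finite A -> component F (setminus (@setT T) A) (d A).
Proof. apply hd. Qed.

Lemma d_nonempty A : finite A -> exists x, d A x.
Proof. intros hA. apply (d_component A hA). Qed.

Lemma d_connected A : finite A -> connected F (d A).
Proof. intros hA. apply (d_component A hA). Qed.

Lemma d_avoids A x : finite A -> d A x -> ~ A x.
Proof. intros hA hx. destruct (d_component A hA) as [_ [s _]]. apply (s x hx). Qed.

Lemma d_antitone A B : finite A -> finite B -> subset A B -> subset (d B) (d A).
Proof. apply hd. Qed.

Lemma d_absorb A C : finite A -> connected F C -> (forall x, C x -> ~ A x) ->
  (exists z, C z /\ d A z) -> subset C (d A).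
Proof.
  intros hA hC hCA hz. apply (component_absorb _ _ _ (d_component A hA) hC); auto.
  intros x hx. split; [exact I|auto].
Qed.

Lemma d_meet A B : finite A -> finite B -> exists z, d A z /\ d B z.
Proof.
  intros hA hB. destruct (d_nonempty (setU A B)) as [z hz]; [apply finite_union; auto|].
  exists z. split.
  - apply (d_antitone A (setU A B)); auto; [apply finite_union; auto|]. intros y hy; left; auto.
  - apply (d_antitone B (setU A B)); auto; [apply finite_union; auto|]. intros y hy; right; auto.
Qed.

Lemma d_subset_of_avoid A X : finite A -> finite X ->
  (forall x, d A x -> ~ X x) -> subset (d A) (d X).
Proof.
  intros hA hX hav. apply d_absorb; auto.
  - apply d_connected; auto.
  - destruct (d_meet A X hA hX) as [z hz]. exists z; auto.
Qed.

Lemma inhabited_of_direction : inhabited T.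
Proof. destruct (d_nonempty _ finite_empty) as [x _]. exact (inhabits x). Qed.

Lemma inhabited_set : inhabited (T -> Prop).
Proof. exact (inhabits (fun _ => False)). Qed.

Definition d_point (B : T -> Prop) : T := epsilon inhabited_of_direction (d B).

Lemma d_point_spec B : finite B -> d B (d_point B).
Proof. intros hB. apply (epsilon_spec inhabited_of_direction (d B)), d_nonempty, hB. Qed.

Definition is_bead B x y E (H : T -> Prop) :=
  F H /\ subset H (d B) /\ H x /\ H y /\ (forall z, E z -> d B z -> H z).

Definition bead B x y E := epsilon inhabited_set (is_bead B x y E).

Lemma bead_spec B x y E : finite B -> d B x -> d B y -> finite E ->
  is_bead B x y E (bead B x y E).
Proof.
  intros hB hx hy [l hl]. apply (epsilon_spec inhabited_set (is_bead B x y E)).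
  destruct (connected_cover (d B) (d_connected B hB) (x :: y :: l)) as [H [fH [sH iH]]].
  exists H. repeat split; auto.
  - apply iH; auto. left; auto.
  - apply iH; auto. right; left; auto.
  - intros z hz hdz. apply iH; auto. right; right; auto.
Qed.

(* Given a rule [g] for sets to add at step [k], stage [k] is the pair
   (B_k, H_(k-1)); H_k joins the chosen points of d(B_k) and d(B_(k+1)) and
   covers [g k B_k] inside d(B_k). *)
Section Chain.
Variable g : nat -> (T -> Prop) -> (T -> Prop).
Hypothesis hg : forall k B, finite B -> finite (g k B).

Fixpoint stage (k : nat) : (T -> Prop) * (T -> Prop) :=
  match k with
  | 0 => (fun _ => False, fun _ => False)
  | S k => let B := fst (stage k) in
           let B' := setU (setU B (snd (stage k))) (g k B) in
           (B', bead B (d_point B) (d_point B') (g k B))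
  end.

Definition chain_set k := fst (stage k).
Definition chain_bead k := snd (stage (S k)).

Lemma chain_set_S k :
  chain_set (S k) = setU (setU (chain_set k) (snd (stage k))) (g k (chain_set k)).
Proof. reflexivity. Qed.

Lemma stage_finite k : finite (chain_set k) /\ finite (snd (stage k)).
Proof.
  induction k as [|k [fB fH]]; [split; apply finite_empty|].
  assert (fB' : finite (chain_set (S k))).
  { rewrite chain_set_S. repeat apply finite_union; auto. }
  split; auto.
  destruct (bead_spec (chain_set k) (d_point (chain_set k)) (d_point (chain_set (S k)))
              (g k (chain_set k))) as [hF' _]; auto.
  - apply d_point_spec; auto.
  - apply (d_antitone (chain_set k) (chain_set (S k))); auto; [|apply d_point_spec; auto].
    rewrite chain_set_S. intros z hz; left; left; auto.
  - apply connectoid_finite; auto.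
Qed.

Lemma chain_set_finite k : finite (chain_set k).
Proof. apply stage_finite. Qed.

Lemma chain_set_mono m n : m <= n -> subset (chain_set m) (chain_set n).
Proof.
  induction 1; intros x hx; auto.
  rewrite chain_set_S. left; left; auto.
Qed.

Lemma g_in_chain_set k : subset (g k (chain_set k)) (chain_set (S k)).
Proof. intros x hx. rewrite chain_set_S. right; auto. Qed.

Lemma chain_bead_in_set k : subset (chain_bead k) (chain_set (S (S k))).
Proof. intros x hx. rewrite chain_set_S. left; right; auto. Qed.

Lemma chain_bead_spec k : is_bead (chain_set k) (d_point (chain_set k))
  (d_point (chain_set (S k))) (g k (chain_set k)) (chain_bead k).
Proof.
  apply bead_spec; try apply d_point_spec; try apply hg; try apply chain_set_finite.
  apply (d_antitone (chain_set k) (chain_set (S k))); try apply d_point_spec;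
    try apply chain_set_finite.
  apply chain_set_mono. lia.
Qed.

Lemma chain_bead_ends k :
  chain_bead k (d_point (chain_set k)) /\ chain_bead k (d_point (chain_set (S k))).
Proof. destruct (chain_bead_spec k) as [_ [_ [h1 [h2 _]]]]. auto. Qed.

Lemma chain_beads_far i j x : S (S i) <= j -> chain_bead i x -> ~ chain_bead j x.
Proof.
  intros hij hi hj. destruct (chain_bead_spec j) as [_ [s _]].
  apply (d_avoids (chain_set j) x (chain_set_finite j) (s x hj)).
  apply (chain_set_mono (S (S i)) j hij), chain_bead_in_set, hi.
Qed.

Lemma chain_beads_meet i j :
  (exists x, chain_bead i x /\ chain_bead j x) <-> (i <= j + 1 /\ j <= i + 1).
Proof.
  split.
  - intros [x [h1 h2]]. split; apply Nat.nlt_ge; intros h.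
    + apply (chain_beads_far j i x); auto; lia.
    + apply (chain_beads_far i j x); auto; lia.
  - intros [h1 h2].
    assert (c : i = j \/ j = S i \/ i = S j) by lia.
    destruct c as [ <- | [ -> | -> ] ].
    + exists (d_point (chain_set i)). split; apply chain_bead_ends.
    + exists (d_point (chain_set (S i))).
      split; [apply (chain_bead_ends i)|apply (chain_bead_ends (S i))].
    + exists (d_point (chain_set (S j))).
      split; [apply (chain_bead_ends (S j))|apply (chain_bead_ends j)].
Qed.

End Chain.

Lemma end_of_beads (H : nat -> T -> Prop) : (forall n, F (H n)) ->
  (forall i j, (exists x, H i x /\ H j x) <-> (i <= j + 1 /\ j <= i + 1)) ->
  (forall X, finite X -> exists k0, forall k, k0 <= k -> exists w, H k w /\ d X w) ->
  exists w, is_end F w /\ forall A, finite A -> isK F A w (d A).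
Proof.
  intros hH hij hc.
  set (N := fun x => exists n, H n x).
  assert (hNeck : necklace F N).
  { split.
    - replace N with (fun x => exists n, 0 <= n /\ H n x).
      + apply chain_connected; [intros n; apply F_connected; auto|].
        intros n; apply (hij n (S n)); lia.
      + apply set_ext. intros x; split.
        * intros [n [_ hn]]; exists n; auto.
        * intros [n hn]; exists n; split; auto; lia.
    - exists H. split; [|split; [intros x; reflexivity|exact hij]].
      intros n. split; [apply connectoid_finite|apply F_connected]; auto. }
  exists (fun M => necklace F M /\ neck_equiv F N M). split.
  - exists N. split; auto. intros M; split; auto.
  - intros A hA. split; [apply d_component; auto|].
    intros M [hM he].
    destruct (he A hA) as [C [hC [[DN [hDN hDNC]] [DM [hDM hDMC]]]]].
    exists DM. split; auto.
    destruct hDN as [[[z hz] [hs [hcon _]]] hfin].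
    assert (sub : subset DN (d A)).
    { apply d_absorb; auto; [intros x hx; apply (hs x hx)|].
      destruct (chain_avoids_finite H (fun i j h => proj1 (proj1 (hij i j) h)) _ hfin) as [n1 hn1].
      destruct (hc A hA) as [k0 hk0].
      destruct (hk0 (Nat.max n1 k0)) as [w [hw1 hw2]]; [lia|].
      exists w. split; auto. apply NNPP; intros hn.
      apply (hn1 (Nat.max n1 k0) w); [lia|auto|]. split; auto. exists (Nat.max n1 k0); auto. }
    replace (d A) with C; auto.
    apply (component_eq _ _ _ hC (d_component A hA)). exists z; auto.
Qed.

Definition dominating (W : T -> Prop) :=
  forall X, finite X -> (forall x, X x -> ~ W x) -> exists w, W w /\ d X w.

Lemma direction_end_dominated :
  (forall Z, finite Z -> exists W, finite W /\ dominating W /\ forall x, W x -> ~ Z x) ->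
  exists w, is_end F w /\ forall A, finite A -> isK F A w (d A).
Proof.
  intros hdom.
  set (good := fun B W => finite W /\ dominating W /\ forall x, W x -> ~ B x).
  set (g := fun (_ : nat) B => epsilon inhabited_set (good B)).
  assert (hgood : forall k B, finite B -> good B (g k B)).
  { intros k B hB. apply epsilon_spec, hdom, hB. }
  assert (hg : forall k B, finite B -> finite (g k B)) by (intros; apply hgood; auto).
  apply (end_of_beads (chain_bead g)).
  - intros n. apply (chain_bead_spec g hg n).
  - apply (chain_beads_meet g hg).
  - intros X hX.
    destruct (finite_eventually (fun n x => forall k, n <= k -> ~ g k (chain_set g k) x) X)
      as [N hN]; auto.
    + intros n m x hnm h k hk. apply h; lia.
    + intros x _. destruct (classic (exists k0, g k0 (chain_set g k0) x)) as [[k0 hk0]|hn].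
      * exists (S k0). intros k hk hx.
        destruct (hgood k (chain_set g k) (chain_set_finite g hg k)) as [_ [_ hdis]].
        apply (hdis x hx), (chain_set_mono g (S k0) k hk), g_in_chain_set, hk0.
      * exists 0. intros k _ hx. apply hn; exists k; auto.
    + exists N. intros k hk.
      set (B := chain_set g k).
      assert (hB : finite B) by apply chain_set_finite, hg.
      destruct (hgood k B hB) as [_ [hW hdis]].
      destruct (hW (setU X B)) as [w [hw1 hw2]]; [apply finite_union; auto| |].
      * intros x [hx|hx] hgx; [apply (hN x hx k hk hgx)|apply (hdis x hgx hx)].
      * assert (hsub : forall Y, subset Y (setU X B) -> finite Y -> d Y w).
        { intros Y hY hfY. apply (d_antitone Y (setU X B)); auto. apply finite_union; auto. }
        exists w. split.
        -- apply (chain_bead_spec g hg k); auto. apply hsub; auto. intros z hz; right; auto.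
        -- apply hsub; auto. intros z hz; left; auto.
Qed.

Section Trapped.
Variable Z : T -> Prop.
Hypothesis hZ : finite Z.
Hypothesis hZdom : forall W, finite W -> dominating W -> exists x, W x /\ Z x.

(* [X] witnesses that [W \ Z] is not dominating. *)
Definition separates W X :=
  finite X /\ (forall x, X x -> ~ (W x /\ ~ Z x)) /\ (forall x, W x -> ~ Z x -> ~ d X x).

Lemma separates_exists W : finite W -> exists X, separates W X.
Proof.
  intros hW. apply NNPP; intros hn.
  destruct (hZdom (fun x => W x /\ ~ Z x)) as [x [[_ hxZ] hx]]; auto.
  - apply finite_subset with W; auto. intros x [h _]; auto.
  - intros X hX hdis. apply NNPP; intros hne. apply hn. exists X. repeat split; auto.
    intros x hx hz hdx. apply hne. exists x. auto.
Qed.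

Definition separator W := epsilon inhabited_set (separates W).

Fixpoint grow n : T -> Prop :=
  match n with
  | 0 => fun x => x = d_point Z
  | S n => setU (grow n) (separator (grow n))
  end.

Definition trap n := setU Z (grow n).

Lemma grow_finite n : finite (grow n).
Proof.
  induction n as [|n IH]; [exists (d_point Z :: nil); intros x hx; left; auto|].
  apply finite_union; auto.
  apply (epsilon_spec inhabited_set (separates (grow n))), separates_exists, IH.
Qed.

Lemma grow_mono m n : m <= n -> subset (grow m) (grow n).
Proof. induction 1; intros x hx; simpl; auto. left; auto. Qed.

Lemma trap_finite n : finite (trap n).
Proof. apply finite_union; auto. apply grow_finite. Qed.

Lemma trap_antitone m n : m <= n -> subset (d (trap n)) (d (trap m)).
Proof.
  intros h. apply d_antitone; try apply trap_finite.
  intros x [hx|hx]; [left|right; apply (grow_mono m n h)]; auto.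
Qed.

(* Join the base point to such a point j by a finite connected Q inside d(Z).
   A late separator X avoids Q, so Q lies in d(X); but X was chosen with the
   base point outside d(X). *)
Lemma trap_no_limit_point : ~ exists j, forall n, d (trap n) j.
Proof.
  intros [j hj].
  assert (hx0 : d Z (d_point Z)) by (apply d_point_spec; auto).
  assert (hjZ : d Z j).
  { apply (d_antitone Z (trap 0)); auto; [apply trap_finite|intros y hy; left; auto]. }
  destruct (d_connected Z hZ _ j hx0 hjZ) as [Q [fQ [sQ [qx0 qj]]]].
  destruct (finite_eventually (fun n x => (exists k, grow k x) -> grow n x) Q) as [N hN].
  - intros n m x hnm hh he. apply (grow_mono n m hnm). auto.
  - apply connectoid_finite; auto.
  - intros x _. destruct (classic (exists k, grow k x)) as [[k hk]|hn].
    + exists k. auto.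
    + exists 0. intros he; contradiction.
  - set (X := separator (grow N)).
    destruct (epsilon_spec inhabited_set _ (separates_exists (grow N) (grow_finite N)))
      as [fX [disX sepX]]; fold X in fX, disX, sepX.
    assert (hXsub : subset X (trap (S N))) by (intros y hy; right; right; auto).
    assert (hQX : subset Q (d X)).
    { apply d_absorb; auto; [apply F_connected; auto| |].
      - intros x hx hxX. apply (disX x hxX). split.
        + apply (hN x hx). exists (S N). right; auto.
        + apply (d_avoids Z x hZ (sQ x hx)).
      - exists j. split; auto. apply (d_antitone X (trap (S N))); auto. apply trap_finite. }
    apply (sepX (d_point Z)).
    + apply (grow_mono 0 N); [lia|reflexivity].
    + apply (d_avoids Z _ hZ hx0).
    + apply hQX; auto.
Qed.

Lemma trap_cofinal X : finite X -> exists n, subset (d (trap n)) (d X).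
Proof.
  intros hX. apply NNPP; intros hn. apply trap_no_limit_point.
  destruct (finite_meets_decreasing (fun n => d (trap n)) X) as [j [_ hj]]; auto.
  - apply trap_antitone.
  - intros n. apply NNPP; intros hmeet. apply hn. exists n.
    apply d_subset_of_avoid; auto; [apply trap_finite|].
    intros x hx hXx. apply hmeet. exists x; auto.
  - exists j; auto.
Qed.

Lemma direction_end_trapped : exists w, is_end F w /\ forall A, finite A -> isK F A w (d A).
Proof.
  set (g := fun k (_ : T -> Prop) => trap k).
  assert (hg : forall k B, finite B -> finite (g k B)) by (intros; apply trap_finite).
  apply (end_of_beads (chain_bead g)).
  - intros n. apply (chain_bead_spec g hg n).
  - apply (chain_beads_meet g hg).
  - intros X hX. destruct (trap_cofinal X hX) as [n hn]. exists (S n). intros k hk.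
    exists (d_point (chain_set g k)). split; [apply (chain_bead_ends g hg k)|].
    apply hn, (d_antitone (trap n) (chain_set g k)); try apply trap_finite;
      try apply chain_set_finite; auto; [|apply d_point_spec, chain_set_finite; auto].
    intros y hy. apply (chain_set_mono g (S n) k hk), (g_in_chain_set g n), hy.
Qed.

End Trapped.

Lemma direction_end : exists w, is_end F w /\ forall A, finite A -> isK F A w (d A).
Proof.
  destruct (classic (forall Z, finite Z ->
              exists W, finite W /\ dominating W /\ forall x, W x -> ~ Z x)) as [hA|hnA].
  - apply direction_end_dominated, hA.
  - apply not_all_ex_not in hnA as [Z hZ]. apply imply_to_and in hZ as [hZ hn].
    apply (direction_end_trapped Z hZ). intros W hW hdom. apply NNPP; intros hne.
    apply hn. exists W. repeat split; auto. intros x hx hz. apply hne. exists x; auto.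
Qed.

End Direction.

End Connectoid.

Theorem theorem1p1 (T : Type) (F : (T -> Prop) -> Prop) (hF : is_connectoid F) :
  (forall w, is_end F w ->
     exists d, is_direction F d /\ forall A, finite A -> isK F A w (d A)) /\
  (forall w d d', is_end F w -> is_direction F d -> is_direction F d' ->
     (forall A, finite A -> isK F A w (d A)) ->
     (forall A, finite A -> isK F A w (d' A)) ->
     forall A, finite A -> forall x, d A x <-> d' A x) /\
  (forall w1 w2 d, is_end F w1 -> is_end F w2 -> is_direction F d ->
     (forall A, finite A -> isK F A w1 (d A)) ->
     (forall A, finite A -> isK F A w2 (d A)) ->
     forall N, w1 N <-> w2 N) /\
  (forall d, is_direction F d ->
     exists w, is_end F w /\ forall A, finite A -> isK F A w (d A)).
Proof.
  split; [|split; [|split]].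
  - intros w hw. apply (end_direction T F hF w hw).
  - intros w d d' hw _ _ h1 h2 A hA x.
    rewrite (isK_unique T F hF w A (d A) (d' A) hw (h1 A hA) (h2 A hA)). reflexivity.
  - intros w1 w2 d hw1 hw2 _ h1 h2 N.
    split; apply (end_eq_of_isK T F hF) with d; auto.
  - intros d hd. apply (direction_end T F hF d hd).
Qed.
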